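(* If the sequent $\vdash A$ (with empty context) has a derivation in LJB, then $\vdash A$ also has a derivation in LJ$^{+}$.
   Context: Minimal predicate logic: terms $t ::= x \mid f(t_1,\dots,t_n)$, formulas $A ::= P(t_1,\dots,t_n)\mid A\rightarrow A\mid \forall x\,A$. Positivity: atomic formulas are positive and negative; $A\rightarrow B$ is positive (resp. negative) if $A$ is negative (resp. positive) and $B$ positive (resp. negative); $\forall x\,A$ is positive if $A$ is positive, never negative. A sequent is positive if its context formulas are negative and its right-hand side positive; both calculi below are for positive sequents. LJ$^{+}$: sequents $\Gamma\vdash A$ with $\Gamma$ a finite multiset of formulas, formulas modulo $\alpha$-equivalence; rules (L$\rightarrow$) from $\Gamma, A_1\rightarrow\dots\rightarrow A_n\rightarrow P\vdash A_i$ ($i=1..n$, $n\ge0$) infer $\Gamma, A_1\rightarrow\dots\rightarrow A_n\rightarrow P\vdash P$, $P$ atomic; (R$\forall$) from $\Gamma\vdash A$ infer $\Gamma\vdash\forall x\,A$ if $x$ not free in $\Gamma$; (R$\rightarrow$) from $\Gamma,A\vdash B$ infer $\Gamma\vdash A\rightarrow B$. LJB: an LJB-context is a finite multiset of items; an item is a formula or $[\Gamma]_V$ ($V$ a finite set of variables bound by the bracket, $\Gamma$ an LJB-context); $FV([\Gamma]_V)=FV(\Gamma)\setminus V$. Cleaning rules (anywhere in a context, contexts being multisets): $[I,\Gamma]_V\longrightarrow I,[\Gamma]_V$ if $FV(I)\cap V=\emptyset$; $[\ ]_V\longrightarrow\emptyset$; $I\,I\longrightarrow I$. This system terminates; $\Gamma{\downarrow}$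 denotes the normal form of $\Gamma$ obtained with a fixed arbitrary strategy. LJB rules apply only to LJB-sequents $\Gamma\vdash A$ with $\Gamma$ in normal form and in which, in each formula, bound variables are pairwise distinct and distinct from free variables; formulas are not identified modulo $\alpha$. Rules: (L$\rightarrow$) from $\Gamma'\vdash A_1,\dots,\Gamma'\vdash A_n$ infer $\Gamma\vdash P$, where $\Gamma=\Gamma_1,[\Gamma_2,[\dots\Gamma_{i-1},[\Gamma_i, A_1\rightarrow\dots\rightarrow A_n\rightarrow P]_{V_{i-1}}\dots]_{V_2}]_{V_1}$ ($i\ge1$), $\Gamma'=([\dots[[\Gamma_1]_{V_1},\Gamma_2]_{V_2},\dots,\Gamma_{i-1}]_{V_{i-1}},\Gamma_i,A_1\rightarrow\dots\rightarrow A_n\rightarrow P){\downarrow}$, $P$ atomic with no free variable in $V_1\cup\dots\cup V_{i-1}$; (R$\forall$) from $[\Gamma]_V{\downarrow}\vdash A$ infer $\Gamma\vdash\forall x\,A$, where $V$ is the set of all variables bound in $\forall x\,A$; (R$\rightarrow$) from $(\Gamma,A){\downarrow}\vdash B$ infer $\Gamma\vdash A\rightarrow B$. *)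

From Stdlib Require Import List Arith Bool Permutation.
Import ListNotations.

Definition var := nat.

Inductive term : Type :=
| Var (x : var)
| Fn (f : nat) (ts : list term).

Inductive formula : Type :=
| Atom (p : nat) (ts : list term)
| Imp (A B : formula)
| All (x : var) (A : formula).

Fixpoint fvt (t : term) : list var :=
  match t with
  | Var x => [x]
  | Fn _ ts => (fix go (l : list term) : list var :=
                  match l with [] => [] | t :: l => fvt t ++ go l end) ts
  end.

Fixpoint fvf (A : formula) : list var :=
  match A with
  | Atom _ ts => flat_map fvt ts
  | Imp A B => fvf A ++ fvf B
  | All x A => remove Nat.eq_dec x (fvf A)
  end.

Fixpoint bv (A : formula) : list var :=
  match A with
  | Atom _ _ => []
  | Imp A B => bv A ++ bv B
  | All x A => x :: bv A
  end.

Definition well_named (A : formula) : Prop :=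
  NoDup (bv A) /\ (forall x, In x (bv A) -> ~ In x (fvf A)).

Fixpoint pos (A : formula) : bool :=
  match A with
  | Atom _ _ => true
  | Imp A B => neg A && pos B
  | All _ A => pos A
  end
with neg (A : formula) : bool :=
  match A with
  | Atom _ _ => true
  | Imp A B => pos A && neg B
  | All _ _ => false
  end.

Fixpoint imps (As : list formula) (C : formula) : formula :=
  match As with
  | [] => C
  | A :: As => Imp A (imps As C)
  end.

Inductive dterm : Type :=
| DB (n : nat)
| DFr (x : var)
| DFn (f : nat) (ts : list dterm).

Inductive dform : Type :=
| DAtom (p : nat) (ts : list dterm)
| DImp (A B : dform)
| DAll (A : dform).

Fixpoint lookup (x : var) (env : list var) : option nat :=
  match env with
  | [] => None
  | y :: e => if Nat.eqb x y then Some 0 else option_map S (lookup x e)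
  end.

Fixpoint dbt (env : list var) (t : term) : dterm :=
  match t with
  | Var x => match lookup x env with Some n => DB n | None => DFr x end
  | Fn f ts => DFn f ((fix go (l : list term) : list dterm :=
                         match l with [] => [] | t :: l => dbt env t :: go l end) ts)
  end.

Fixpoint dbf (env : list var) (A : formula) : dform :=
  match A with
  | Atom p ts => DAtom p (map (dbt env) ts)
  | Imp A B => DImp (dbf env A) (dbf env B)
  | All x A => DAll (dbf (x :: env) A)
  end.

Definition alpha (A B : formula) : Prop := dbf [] A = dbf [] B.

Definition positive_seq (G : list formula) (A : formula) : Prop :=
  (forall B, In B G -> neg B = true) /\ pos A = true.

(* Contexts are lists read as multisets (all rules are permutation-invariant);
   formulas are taken modulo alpha via the rule LJp_alpha. *)
Inductive LJp : list formula -> formula -> Prop :=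
| LJp_L (G : list formula) (As : list formula) (p : nat) (ts : list term) :
    positive_seq G (Atom p ts) ->
    In (imps As (Atom p ts)) G ->
    (forall A, In A As -> LJp G A) ->
    LJp G (Atom p ts)
| LJp_Rall (G : list formula) (x : var) (A : formula) :
    positive_seq G (All x A) ->
    (forall B, In B G -> ~ In x (fvf B)) ->
    LJp G A ->
    LJp G (All x A)
| LJp_Rimp (G : list formula) (A B : formula) :
    positive_seq G (Imp A B) ->
    LJp (A :: G) B ->
    LJp G (Imp A B)
| LJp_alpha (G G' : list formula) (A A' : formula) :
    Forall2 alpha G G' -> alpha A A' -> LJp G' A' -> LJp G A.

Inductive item : Type :=
| IFm (A : formula)
| IB (V : list var) (D : list item).   (* [D]_V, V read as a finite set *)

Definition ctx := list item.

(* equality of items: multisets inside brackets, sets for V *)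
Inductive item_equiv : item -> item -> Prop :=
| ieF (A : formula) : item_equiv (IFm A) (IFm A)
| ieB (V V' : list var) (D D0 D' : list item) :
    (forall x, In x V <-> In x V') ->
    Permutation D D0 -> Forall2 item_equiv D0 D' ->
    item_equiv (IB V D) (IB V' D').

Definition ctx_equiv (G G' : ctx) : Prop :=
  exists G0, Permutation G G0 /\ Forall2 item_equiv G0 G'.

Fixpoint fvi (J : item) : list var :=
  match J with
  | IFm A => fvf A
  | IB V D => filter (fun x => negb (existsb (Nat.eqb x) V))
                ((fix go (l : list item) : list var :=
                    match l with [] => [] | J :: l => fvi J ++ go l end) D)
  end.

Fixpoint formsi (J : item) : list formula :=
  match J with
  | IFm A => [A]
  | IB _ D => (fix go (l : list item) : list formula :=
                 match l with [] => [] | J :: l => formsi J ++ go l end) D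
  end.

Definition formsc (G : ctx) : list formula := flat_map formsi G.

Inductive clean_step : ctx -> ctx -> Prop :=
| cs_out (G G' : ctx) (V : list var) (J : item) (D R : ctx) :
    ctx_equiv G (IB V (J :: D) :: R) ->
    (forall x, In x (fvi J) -> ~ In x V) ->
    ctx_equiv G' (J :: IB V D :: R) ->
    clean_step G G'
| cs_empty (G G' : ctx) (V : list var) (R : ctx) :
    ctx_equiv G (IB V [] :: R) -> ctx_equiv G' R -> clean_step G G'
| cs_dup (G G' : ctx) (J : item) (R : ctx) :
    ctx_equiv G (J :: J :: R) -> ctx_equiv G' (J :: R) -> clean_step G G'
| cs_in (G G' : ctx) (V : list var) (D D' R : ctx) :
    ctx_equiv G (IB V D :: R) -> clean_step D D' ->
    ctx_equiv G' (IB V D' :: R) -> clean_step G G'.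

Inductive clean_star : ctx -> ctx -> Prop :=
| cst_refl (G G' : ctx) : ctx_equiv G G' -> clean_star G G'
| cst_step (G G1 G2 : ctx) : clean_step G G1 -> clean_star G1 G2 -> clean_star G G2.

Definition normal (G : ctx) : Prop := forall G', ~ clean_step G G'.

(* nf is "normal form computed by a fixed arbitrary strategy": a function on
   multisets of items returning a normal form reachable by cleaning. *)
Definition clean_strategy (nf : ctx -> ctx) : Prop :=
  (forall G, clean_star G (nf G) /\ normal (nf G)) /\
  (forall G G', ctx_equiv G G' -> ctx_equiv (nf G) (nf G')).

Definition ljb_sequent (G : ctx) (A : formula) : Prop :=
  normal G /\
  (forall B, In B (formsc G) -> well_named B /\ neg B = true) /\
  well_named A /\ pos A = true.

(* path = [(G1,V1); ...; (G_{i-1},V_{i-1})] *)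
Fixpoint plug (path : list (ctx * list var)) (inner : ctx) : ctx :=
  match path with
  | [] => inner
  | (G, V) :: r => G ++ [IB V (plug r inner)]
  end.

(* unwind acc path: acc := [acc, G_k]_{V_k} successively;
   unwind [] path = [ ... [[G1]_{V1}, G2]_{V2}, ..., G_{i-1}]_{V_{i-1}} *)
Fixpoint unwind (acc : ctx) (path : list (ctx * list var)) : ctx :=
  match path with
  | [] => acc
  | (G, V) :: r => unwind [IB V (acc ++ G)] r
  end.

Inductive LJB (nf : ctx -> ctx) : ctx -> formula -> Prop :=
| LJB_L (G : ctx) (path : list (ctx * list var)) (Gi : ctx)
        (As : list formula) (p : nat) (ts : list term) :
    ljb_sequent G (Atom p ts) ->
    ctx_equiv G (plug path (Gi ++ [IFm (imps As (Atom p ts))])) ->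
    (forall x, In x (flat_map fvt ts) -> ~ In x (flat_map snd path)) ->
    (forall A, In A As ->
       LJB nf (nf (unwind [] path ++ Gi ++ [IFm (imps As (Atom p ts))])) A) ->
    LJB nf G (Atom p ts)
| LJB_Rall (G : ctx) (x : var) (A : formula) :
    ljb_sequent G (All x A) ->
    LJB nf (nf [IB (bv (All x A)) G]) A ->
    LJB nf G (All x A)
| LJB_Rimp (G : ctx) (A B : formula) :
    ljb_sequent G (Imp A B) ->
    LJB nf (nf (G ++ [IFm A])) B ->
    LJB nf G (Imp A B).

(* An LJB context is read in an LJ+ context L through a renaming r of free
   variables: a formula B of the context must have in L an alpha-variant of B
   renamed by r, and a bracket [D]_V is read as D under some renaming that
   agrees with r outside V.  Brackets thus record that the variables of V may
   be renamed apart, which is what the side condition of the LJ+ rule R∀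
   requires.  This reading survives cleaning, the LJB rule R∀ becomes the LJ+
   rule R∀ on an eigenvariable renamed fresh for L, and the LJB rule L→ becomes
   the LJ+ rule L→ on the formula of L that reads the chosen formula.  Alpha
   conversion is handled on de Bruijn representations, where renaming free
   variables cannot cause capture. *)

From Stdlib Require Import List Arith Bool Permutation Lia.
Import ListNotations.

Fixpoint term_nested_ind (P : term -> Prop) (HV : forall x, P (Var x))
  (HF : forall f ts, Forall P ts -> P (Fn f ts)) (t : term) : P t :=
  match t with
  | Var x => HV x
  | Fn f ts => HF f ts ((fix go (l : list term) : Forall P l :=
       match l with
       | [] => Forall_nil _
       | u :: l => Forall_cons _ (term_nested_ind P HV HF u) (go l)
       end) ts)
  end.

Fixpoint dterm_nested_ind (P : dterm -> Prop) (HB : forall n, P (DB n))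
  (HV : forall x, P (DFr x)) (HF : forall f ts, Forall P ts -> P (DFn f ts))
  (t : dterm) : P t :=
  match t with
  | DB n => HB n
  | DFr x => HV x
  | DFn f ts => HF f ts ((fix go (l : list dterm) : Forall P l :=
       match l with
       | [] => Forall_nil _
       | u :: l => Forall_cons _ (dterm_nested_ind P HB HV HF u) (go l)
       end) ts)
  end.

Lemma fvt_Fn f ts : fvt (Fn f ts) = flat_map fvt ts.
Proof. simpl; induction ts; simpl; congruence. Qed.

Lemma dbt_Fn env f ts : dbt env (Fn f ts) = DFn f (map (dbt env) ts).
Proof. simpl; f_equal; induction ts; simpl; congruence. Qed.

Lemma map_preimage {X Y Z} (f : X -> Z) (g : Y -> Z) (l : list Y) :
  (forall y, In y l -> exists x, f x = g y) -> exists l', map f l' = map g l.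
Proof.
  induction l as [|y l IH]; intros Hl.
  - exists []; reflexivity.
  - destruct (Hl y (or_introl eq_refl)) as [x Hx].
    destruct IH as [l' Hl']; [intros; apply Hl; right; assumption|].
    exists (x :: l'); simpl; congruence.
Qed.

Lemma exists_fresh (l : list var) : exists z, ~ In z l.
Proof.
  exists (S (list_max l)); intros Hz.
  assert (Hmax : list_max l <= list_max l) by lia.
  apply list_max_le in Hmax; rewrite Forall_forall in Hmax.
  specialize (Hmax _ Hz); lia.
Qed.

(** * Renaming free variables of de Bruijn formulas *)

Fixpoint rename_dterm (r : var -> var) (t : dterm) : dterm :=
  match t with
  | DB n => DB n
  | DFr x => DFr (r x)
  | DFn f ts => DFn f (map (rename_dterm r) ts)
  end.

Fixpoint rename_dform (r : var -> var) (d : dform) : dform :=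
  match d with
  | DAtom p ts => DAtom p (map (rename_dterm r) ts)
  | DImp a b => DImp (rename_dform r a) (rename_dform r b)
  | DAll a => DAll (rename_dform r a)
  end.

(* Free occurrences of [z] become the index [k] as seen from the root of the
   formula, hence [S k] under a binder. *)
Fixpoint abstract_dterm (z : var) (k : nat) (t : dterm) : dterm :=
  match t with
  | DB n => DB n
  | DFr x => if Nat.eqb x z then DB k else DFr x
  | DFn f ts => DFn f (map (abstract_dterm z k) ts)
  end.

Fixpoint abstract_dform (z : var) (k : nat) (d : dform) : dform :=
  match d with
  | DAtom p ts => DAtom p (map (abstract_dterm z k) ts)
  | DImp a b => DImp (abstract_dform z k a) (abstract_dform z k b)
  | DAll a => DAll (abstract_dform z (S k) a)
  end.

Fixpoint dfv_term (t : dterm) : list var :=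
  match t with
  | DB _ => []
  | DFr x => [x]
  | DFn _ ts => flat_map dfv_term ts
  end.

Fixpoint dfv_form (d : dform) : list var :=
  match d with
  | DAtom _ ts => flat_map dfv_term ts
  | DImp a b => dfv_form a ++ dfv_form b
  | DAll a => dfv_form a
  end.

Fixpoint dpos (d : dform) : bool :=
  match d with
  | DAtom _ _ => true
  | DImp a b => dneg a && dpos b
  | DAll a => dpos a
  end
with dneg (d : dform) : bool :=
  match d with
  | DAtom _ _ => true
  | DImp a b => dpos a && dneg b
  | DAll _ => false
  end.

Definition update (r : var -> var) (x z : var) : var -> var :=
  fun y => if Nat.eqb y x then z else r y.

Lemma pos_neg_dbf A : forall env, pos A = dpos (dbf env A) /\ neg A = dneg (dbf env A).
Proof.
  induction A as [p ts|A IHA B IHB|x A IHA]; intros env; simpl; auto.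
  - destruct (IHA env) as [-> ->], (IHB env) as [-> ->]; auto.
  - destruct (IHA (x :: env)) as [-> _]; auto.
Qed.

Lemma pos_neg_rename_dform d r :
  dpos (rename_dform r d) = dpos d /\ dneg (rename_dform r d) = dneg d.
Proof.
  induction d as [p ts|a IHa b IHb|a IHa]; simpl; auto.
  - destruct IHa as [-> ->], IHb as [-> ->]; auto.
  - destruct IHa as [-> _]; auto.
Qed.

Lemma rename_dterm_ext_in t r s :
  (forall y, In y (dfv_term t) -> r y = s y) -> rename_dterm r t = rename_dterm s t.
Proof.
  induction t as [n|x|f ts IH] using dterm_nested_ind; intros Hrs; simpl in *.
  - reflexivity.
  - f_equal; auto.
  - f_equal; apply map_ext_in; intros u Hu.
    apply (proj1 (Forall_forall _ _) IH u Hu); intros y Hy.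
    apply Hrs, in_flat_map; eauto.
Qed.

Lemma rename_dform_ext_in d r s :
  (forall y, In y (dfv_form d) -> r y = s y) -> rename_dform r d = rename_dform s d.
Proof.
  induction d as [p ts|a IHa b IHb|a IHa]; intros Hrs; simpl in *.
  - f_equal; apply map_ext_in; intros u Hu.
    apply rename_dterm_ext_in; intros y Hy; apply Hrs, in_flat_map; eauto.
  - rewrite IHa, IHb; auto; intros y Hy; apply Hrs, in_or_app; auto.
  - rewrite IHa; auto.
Qed.

Lemma rename_dterm_id t : rename_dterm (fun y => y) t = t.
Proof.
  induction t as [n|x|f ts IH] using dterm_nested_ind; simpl; auto.
  f_equal; rewrite <- (map_id ts) at 2; apply map_ext_in.
  exact (proj1 (Forall_forall _ _) IH).
Qed.

Lemma rename_dform_id d : rename_dform (fun y => y) d = d.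
Proof.
  induction d as [p ts|a IHa b IHb|a IHa]; simpl; try congruence.
  f_equal; rewrite <- (map_id ts) at 2; apply map_ext, rename_dterm_id.
Qed.

Lemma abstract_rename_dterm t r x z k :
  (forall y, In y (dfv_term t) -> y <> x -> r y <> z) ->
  abstract_dterm z k (rename_dterm (update r x z) t) = rename_dterm r (abstract_dterm x k t).
Proof.
  induction t as [n|y|f ts IH] using dterm_nested_ind; intros Hz; simpl in *.
  - reflexivity.
  - unfold update; destruct (Nat.eqb y x) eqn:Eyx; simpl.
    + rewrite Nat.eqb_refl; reflexivity.
    + apply Nat.eqb_neq in Eyx.
      destruct (Nat.eqb (r y) z) eqn:Ez; [|reflexivity].
      apply Nat.eqb_eq in Ez; exfalso; exact (Hz y (or_introl eq_refl) Eyx Ez).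
  - f_equal; rewrite !map_map; apply map_ext_in; intros u Hu.
    apply (proj1 (Forall_forall _ _) IH u Hu); intros y Hy.
    apply Hz, in_flat_map; eauto.
Qed.

Lemma abstract_rename_dform d r x z k :
  (forall y, In y (dfv_form d) -> y <> x -> r y <> z) ->
  abstract_dform z k (rename_dform (update r x z) d) = rename_dform r (abstract_dform x k d).
Proof.
  revert k; induction d as [p ts|a IHa b IHb|a IHa]; intros k Hz; simpl in *.
  - f_equal; rewrite !map_map; apply map_ext_in; intros u Hu.
    apply abstract_rename_dterm; intros y Hy; apply Hz, in_flat_map; eauto.
  - rewrite IHa, IHb; auto; intros y Hy; apply Hz, in_or_app; auto.
  - rewrite IHa; auto.
Qed.

Lemma lookup_snoc y env z :
  lookup y (env ++ [z]) =
  match lookup y env with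
  | Some n => Some n
  | None => if Nat.eqb y z then Some (length env) else None
  end.
Proof.
  induction env as [|w env IH]; simpl.
  - destruct (Nat.eqb y z); reflexivity.
  - destruct (Nat.eqb y w); [reflexivity|].
    rewrite IH; destruct (lookup y env); simpl; [reflexivity|].
    destruct (Nat.eqb y z); reflexivity.
Qed.

Lemma lookup_lt_length env y n : lookup y env = Some n -> n < length env.
Proof.
  revert n; induction env as [|w env IH]; simpl; intros n H; [discriminate|].
  destruct (Nat.eqb y w); [injection H as <-; lia|].
  destruct (lookup y env) eqn:E; simpl in H; [|discriminate].
  injection H as <-; specialize (IH _ eq_refl); lia.
Qed.

Lemma lookup_notin env y : ~ In y env -> lookup y env = None.
Proof.
  induction env as [|w env IH]; simpl; intros Hy; [reflexivity|].
  destruct (Nat.eqb y w) eqn:E.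
  - apply Nat.eqb_eq in E; subst; tauto.
  - rewrite IH; auto.
Qed.

Lemma lookup_nth env n d : NoDup env -> n < length env -> lookup (nth n env d) env = Some n.
Proof.
  revert n; induction env as [|w env IH]; simpl; intros n Hnd Hn; [lia|].
  inversion Hnd as [|? ? Hw Hnd']; subst; destruct n as [|n].
  - rewrite Nat.eqb_refl; reflexivity.
  - destruct (Nat.eqb (nth n env d) w) eqn:E.
    + apply Nat.eqb_eq in E; exfalso; apply Hw; rewrite <- E; apply nth_In; lia.
    + rewrite IH; auto; lia.
Qed.

Lemma dbt_snoc t env z : dbt (env ++ [z]) t = abstract_dterm z (length env) (dbt env t).
Proof.
  induction t as [x|f ts IH] using term_nested_ind.
  - simpl; rewrite lookup_snoc; destruct (lookup x env); simpl; [reflexivity|].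
    destruct (Nat.eqb x z); reflexivity.
  - rewrite !dbt_Fn; simpl; f_equal; rewrite map_map; apply map_ext_in.
    exact (proj1 (Forall_forall _ _) IH).
Qed.

Lemma dbf_snoc A : forall env z, dbf (env ++ [z]) A = abstract_dform z (length env) (dbf env A).
Proof.
  induction A as [p ts|A IHA B IHB|x A IHA]; intros env z; simpl.
  - f_equal; rewrite map_map; apply map_ext; intros; apply dbt_snoc.
  - rewrite IHA, IHB; reflexivity.
  - f_equal; apply (IHA (x :: env)).
Qed.

Lemma dfv_dbt t env y :
  In y (dfv_term (dbt env t)) -> In y (fvt t) /\ lookup y env = None.
Proof.
  induction t as [x|f ts IH] using term_nested_ind; intros Hy.
  - simpl in Hy; destruct (lookup x env) eqn:E; simpl in Hy; [contradiction|].
    destruct Hy as [<-|[]]; simpl; auto.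
  - rewrite dbt_Fn in Hy; rewrite fvt_Fn; simpl in Hy.
    apply in_flat_map in Hy as [u [Hu Hy]]; apply in_map_iff in Hu as [t [<- Ht]].
    destruct (proj1 (Forall_forall _ _) IH t Ht Hy); split; auto.
    apply in_flat_map; eauto.
Qed.

Lemma dfv_dbf A : forall env y,
  In y (dfv_form (dbf env A)) -> In y (fvf A) /\ lookup y env = None.
Proof.
  induction A as [p ts|A IHA B IHB|x A IHA]; intros env y Hy; simpl in *.
  - apply in_flat_map in Hy as [u [Hu Hy]]; apply in_map_iff in Hu as [t [<- Ht]].
    destruct (dfv_dbt t env y Hy); split; auto; apply in_flat_map; eauto.
  - apply in_app_or in Hy as [Hy|Hy].
    + destruct (IHA env y Hy); split; auto; apply in_or_app; auto.
    + destruct (IHB env y Hy); split; auto; apply in_or_app; auto.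
  - destruct (IHA (x :: env) y Hy) as [HA Henv]; simpl in Henv.
    destruct (Nat.eqb y x) eqn:E; [discriminate|]; apply Nat.eqb_neq in E.
    split; [apply in_in_remove; auto|].
    destruct (lookup y env); [discriminate|reflexivity].
Qed.

Lemma dbt_onto_rename t : forall env env' s,
  length env = length env' -> NoDup env' ->
  (forall w, lookup w env = None -> In w (fvt t) -> ~ In (s w) env') ->
  exists u, dbt env' u = rename_dterm s (dbt env t).
Proof.
  induction t as [x|f ts IH] using term_nested_ind; intros env env' s Hlen Hnd Hs.
  - simpl; destruct (lookup x env) as [n|] eqn:E.
    + exists (Var (nth n env' 0)); simpl; rewrite lookup_nth; auto.
      apply lookup_lt_length in E; lia.
    + exists (Var (s x)); simpl; rewrite lookup_notin; auto.
      apply Hs; simpl; auto.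
  - destruct (map_preimage (dbt env') (fun t => rename_dterm s (dbt env t)) ts)
      as [us Hus].
    { intros t Ht; apply (proj1 (Forall_forall _ _) IH t Ht); auto.
      intros w Hw Hwt; apply Hs; auto; rewrite fvt_Fn; apply in_flat_map; eauto. }
    exists (Fn f us); rewrite !dbt_Fn; simpl; rewrite Hus, map_map; reflexivity.
Qed.

Lemma dbf_onto_rename A : forall env env' s,
  length env = length env' -> NoDup env' ->
  (forall w, lookup w env = None -> In w (fvf A) -> ~ In (s w) env') ->
  exists B, dbf env' B = rename_dform s (dbf env A).
Proof.
  induction A as [p ts|A IHA B IHB|x A IHA]; intros env env' s Hlen Hnd Hs; simpl in *.
  - destruct (map_preimage (dbt env') (fun t => rename_dterm s (dbt env t)) ts)
      as [us Hus].
    { intros t Ht; apply dbt_onto_rename; auto.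
      intros w Hw Hwt; apply Hs; auto; apply in_flat_map; eauto. }
    exists (Atom p us); simpl; rewrite Hus, map_map; reflexivity.
  - destruct (IHA env env' s) as [A' HA']; auto.
    { intros; apply Hs; auto; apply in_or_app; auto. }
    destruct (IHB env env' s) as [B' HB']; auto.
    { intros; apply Hs; auto; apply in_or_app; auto. }
    exists (Imp A' B'); simpl; congruence.
  - destruct (exists_fresh (env' ++ map s (fvf A))) as [y Hy].
    destruct (IHA (x :: env) (y :: env') s) as [B HB]; simpl; auto.
    { constructor; auto; intros H; apply Hy, in_or_app; auto. }
    { intros w Hw HwA [Hyw|Hw'].
      - apply Hy, in_or_app; right; rewrite Hyw; apply in_map; auto.
      - destruct (Nat.eqb w x) eqn:E; [discriminate|]; apply Nat.eqb_neq in E.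
        apply (Hs w); auto; [|apply in_in_remove; auto].
        destruct (lookup w env); [discriminate|reflexivity]. }
    exists (All y B); simpl; f_equal; exact HB.
Qed.

Definition alpha_renamed (r : var -> var) (A C : formula) : Prop :=
  dbf [] C = rename_dform r (dbf [] A).

Lemma alpha_renamed_alpha r A C C' :
  alpha_renamed r A C -> alpha_renamed r A C' -> alpha C C'.
Proof. unfold alpha_renamed, alpha; congruence. Qed.

Lemma alpha_renamed_id A : alpha_renamed (fun y => y) A A.
Proof. unfold alpha_renamed; rewrite rename_dform_id; reflexivity. Qed.

Lemma alpha_renamed_pos_neg r A C : alpha_renamed r A C -> pos C = pos A /\ neg C = neg A.
Proof.
  unfold alpha_renamed; intros HC.
  destruct (pos_neg_dbf C []) as [-> ->], (pos_neg_dbf A []) as [-> ->].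
  rewrite HC; apply pos_neg_rename_dform.
Qed.

Lemma alpha_renamed_ext_in r s A C :
  (forall y, In y (fvf A) -> r y = s y) -> alpha_renamed r A C -> alpha_renamed s A C.
Proof.
  unfold alpha_renamed; intros Hrs ->; apply rename_dform_ext_in.
  intros y Hy; apply Hrs, (dfv_dbf A [] y Hy).
Qed.

Lemma alpha_renamed_Imp_inv r A B C :
  alpha_renamed r (Imp A B) C ->
  exists A' B', C = Imp A' B' /\ alpha_renamed r A A' /\ alpha_renamed r B B'.
Proof.
  unfold alpha_renamed; destruct C as [|A' B'|]; simpl; intros HC; try discriminate.
  injection HC as HA HB; exists A', B'; auto.
Qed.

Lemma alpha_renamed_imps_inv r As p ts C :
  alpha_renamed r (imps As (Atom p ts)) C ->
  exists Cs ts', C = imps Cs (Atom p ts') /\ alpha_renamed r (Atom p ts) (Atom p ts') /\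
    (forall c, In c Cs -> exists a, In a As /\ alpha_renamed r a c).
Proof.
  revert C; induction As as [|A As IH]; intros C HC; simpl in HC.
  - unfold alpha_renamed in HC; destruct C as [p' ts'| |]; simpl in HC; try discriminate.
    assert (p' = p) as -> by (injection HC; auto).
    exists [], ts'; repeat split; [exact HC|intros _ []].
  - apply alpha_renamed_Imp_inv in HC as [A' [C' [-> [HA HC']]]].
    destruct (IH C' HC') as [Cs [ts' [-> [Hts Hcs]]]].
    exists (A' :: Cs), ts'; repeat split; auto.
    intros c [<-|Hc]; [exists A; simpl; auto|].
    destruct (Hcs c Hc) as [a [Ha Hac]]; exists a; simpl; auto.
Qed.

Lemma alpha_renamed_All_fresh r x z A :
  ~ In z (map r (dfv_form (dbf [] A))) ->
  exists B, alpha_renamed (update r x z) A B /\ alpha_renamed r (All x A) (All z B).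
Proof.
  intros Hz; unfold alpha_renamed.
  destruct (dbf_onto_rename A [] [] (update r x z)) as [B HB]; auto using NoDup_nil.
  exists B; split; [exact HB|]; simpl.
  pose proof (dbf_snoc B [] z) as EB; pose proof (dbf_snoc A [] x) as EA; simpl in EA, EB.
  rewrite EA, EB, HB; f_equal; apply abstract_rename_dform.
  intros y Hy _ Hyz; apply Hz; rewrite <- Hyz; apply in_map; exact Hy.
Qed.

Lemma LJp_alpha_r G A A' : alpha A A' -> LJp G A' -> LJp G A.
Proof.
  apply LJp_alpha; induction G; constructor; [reflexivity|assumption].
Qed.

(** * Reading LJB contexts in LJ+ contexts *)

Fixpoint item_nested_ind (P : item -> Prop) (HF : forall A, P (IFm A))
  (HB : forall V D, Forall P D -> P (IB V D)) (J : item) : P J :=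
  match J with
  | IFm A => HF A
  | IB V D => HB V D ((fix go (l : list item) : Forall P l :=
       match l with
       | [] => Forall_nil _
       | u :: l => Forall_cons _ (item_nested_ind P HF HB u) (go l)
       end) D)
  end.

Fixpoint item_equiv_nested_ind (P : item -> item -> Prop)
  (HF : forall A, P (IFm A) (IFm A))
  (HB : forall V V' D D0 D', (forall x, In x V <-> In x V') -> Permutation D D0 ->
        Forall2 P D0 D' -> P (IB V D) (IB V' D'))
  (J J' : item) (H : item_equiv J J') {struct H} : P J J' :=
  match H with
  | ieF A => HF A
  | ieB V V' D D0 D' hV hP hF => HB V V' D D0 D' hV hP
      ((fix go (l1 l2 : list item) (h : Forall2 item_equiv l1 l2) {struct h}
          : Forall2 P l1 l2 :=
          match h with
          | Forall2_nil _ => Forall2_nil _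
          | Forall2_cons x y hxy hl =>
              Forall2_cons _ _ (item_equiv_nested_ind P HF HB x y hxy) (go _ _ hl)
          end) D0 D' hF)
  end.

Lemma fvi_IB V D :
  fvi (IB V D) = filter (fun x => negb (existsb (Nat.eqb x) V)) (flat_map fvi D).
Proof. simpl; f_equal; induction D; simpl; congruence. Qed.

Lemma in_fvi_IB y V D : In y (fvi (IB V D)) <-> (exists J, In J D /\ In y (fvi J)) /\ ~ In y V.
Proof.
  rewrite fvi_IB, filter_In, in_flat_map, negb_true_iff.
  assert (HV : existsb (Nat.eqb y) V = true <-> In y V).
  { rewrite existsb_exists; split.
    - intros [w [Hw E]]; apply Nat.eqb_eq in E; subst; exact Hw.
    - intros Hy; exists y; rewrite Nat.eqb_refl; auto. }
  destruct (existsb (Nat.eqb y) V); intuition discriminate.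
Qed.

Fixpoint realized (L : list formula) (r : var -> var) (J : item) {struct J} : Prop :=
  match J with
  | IFm B => exists C, In C L /\ alpha_renamed r B C
  | IB V D => exists r', (forall y, ~ In y V -> r' y = r y) /\
      (fix go (l : list item) : Prop :=
         match l with [] => True | J :: l => realized L r' J /\ go l end) D
  end.

Lemma realized_IB L r V D :
  realized L r (IB V D) <->
  exists r', (forall y, ~ In y V -> r' y = r y) /\ Forall (realized L r') D.
Proof.
  simpl; split; intros [r' [Hr' HD]]; exists r'; split; auto; clear Hr'.
  - induction D; [constructor|]; destruct HD; constructor; auto.
  - induction HD; simpl; auto.
Qed.

Lemma realized_ext_in L J : forall r s,
  (forall y, In y (fvi J) -> r y = s y) -> realized L r J -> realized L s J.
Proof.
  induction J as [B|V D IH] using item_nested_ind; intros r s Hrs HJ.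
  - destruct HJ as [C [HC HBC]]; exists C; split; auto.
    apply (alpha_renamed_ext_in r); auto.
  - apply realized_IB in HJ as [r' [Hr' HD]]; apply realized_IB.
    exists (fun y => if in_dec Nat.eq_dec y V then r' y else s y); split.
    + intros y Hy; destruct (in_dec Nat.eq_dec y V); tauto.
    + rewrite Forall_forall in *; intros J HJ; apply (IH J HJ r'); auto.
      intros y Hy; destruct (in_dec Nat.eq_dec y V); auto.
      rewrite Hr', Hrs; auto; apply in_fvi_IB; eauto.
Qed.

Lemma realized_incl L L' J : forall r, incl L L' -> realized L r J -> realized L' r J.
Proof.
  induction J as [B|V D IH] using item_nested_ind; intros r HL HJ.
  - destruct HJ as [C [HC HBC]]; exists C; auto.
  - apply realized_IB in HJ as [r' [Hr' HD]]; apply realized_IB; exists r'; split; auto.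
    rewrite Forall_forall in *; intros J HJ; apply (IH J HJ); auto.
Qed.

Lemma Forall_iff_Forall2 {X} (P Q : X -> Prop) (R : X -> X -> Prop) l l' :
  (forall x x', R x x' -> P x <-> Q x') -> Forall2 R l l' -> Forall P l <-> Forall Q l'.
Proof.
  intros HPQ HR; induction HR as [|x x' l l' Hx _ IH]; [split; constructor|].
  rewrite !Forall_cons_iff, (HPQ x x' Hx), IH; reflexivity.
Qed.

Lemma Forall_Permutation_iff {X} (P : X -> Prop) l l' :
  Permutation l l' -> Forall P l <-> Forall P l'.
Proof.
  intros Hp; split; apply Permutation_Forall; [|apply Permutation_sym]; exact Hp.
Qed.

Lemma realized_item_equiv J J' : item_equiv J J' ->
  forall L r, realized L r J <-> realized L r J'.
Proof.
  induction 1 as [B|V V' D D0 D' HV HP IH] using item_equiv_nested_ind;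
    intros L r; [reflexivity|].
  rewrite !realized_IB; split; intros [r' [Hr' HD']]; exists r'; split.
  - intros y Hy; apply Hr'; rewrite HV; exact Hy.
  - rewrite <- (Forall_iff_Forall2 _ _ _ _ _ (fun J J' H => H L r') IH).
    rewrite <- (Forall_Permutation_iff _ _ _ HP); exact HD'.
  - intros y Hy; apply Hr'; rewrite <- HV; exact Hy.
  - rewrite (Forall_Permutation_iff _ _ _ HP).
    rewrite (Forall_iff_Forall2 _ _ _ _ _ (fun J J' H => H L r') IH); exact HD'.
Qed.

Lemma realized_ctx_equiv G G' L r :
  ctx_equiv G G' -> Forall (realized L r) G <-> Forall (realized L r) G'.
Proof.
  intros [G0 [HP HF]]; rewrite (Forall_Permutation_iff _ _ _ HP).
  apply (Forall_iff_Forall2 _ _ item_equiv); auto.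
  intros J J' HJ; apply realized_item_equiv; exact HJ.
Qed.

Lemma realized_clean_step G G' : clean_step G G' ->
  forall L r, Forall (realized L r) G -> Forall (realized L r) G'.
Proof.
  induction 1 as [G G' V J D R HG HJ HG'|G G' V R HG HG'|G G' J R HG HG'
                 |G G' V D D' R HG _ IH HG'];
    intros L r HGr; rewrite (realized_ctx_equiv _ _ _ _ HG) in HGr;
    rewrite (realized_ctx_equiv _ _ _ _ HG'); inversion HGr as [|? ? HB HR]; subst.
  - apply realized_IB in HB as [r' [Hr' HJD]]; inversion HJD; subst.
    constructor; [|constructor; auto; apply realized_IB; eauto].
    apply (realized_ext_in L J r'); auto.
  - exact HR.
  - exact HR.
  - apply realized_IB in HB as [r' [Hr' HD]].
    constructor; auto; apply realized_IB; eauto.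
Qed.

Lemma realized_nf nf G L r : clean_strategy nf ->
  Forall (realized L r) G -> Forall (realized L r) (nf G).
Proof.
  intros [Hnf _] HG; destruct (Hnf G) as [Hstar _]; clear Hnf.
  induction Hstar as [G G' HGG'|G G1 G2 Hstep _ IH].
  - apply (realized_ctx_equiv _ _ _ _ HGG'); exact HG.
  - apply IH, (realized_clean_step _ _ Hstep); exact HG.
Qed.

(* [acc] collects the contexts met on the way down, re-packed by [unwind]
   under the renaming reached at the innermost bracket. *)
Lemma realized_plug_unwind L path : forall inner r acc,
  Forall (realized L r) acc -> Forall (realized L r) (plug path inner) ->
  exists ri, Forall (realized L ri) inner /\ Forall (realized L ri) (unwind acc path) /\
    (forall y, ~ In y (flat_map snd path) -> ri y = r y).
Proof.
  induction path as [|[G V] path IH]; simpl; intros inner r acc Hacc Hplug.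
  - exists r; auto.
  - apply Forall_app in Hplug as [HG HB]; inversion HB as [|? ? HIB _]; subst.
    apply realized_IB in HIB as [r' [Hr' Hinner]].
    destruct (IH inner r' [IB V (acc ++ G)]) as [ri [Hi [Hu Hri]]]; auto.
    { constructor; auto; apply realized_IB; exists r; split.
      - intros y Hy; symmetry; auto.
      - apply Forall_app; auto. }
    exists ri; repeat split; auto; intros y Hy.
    rewrite Hri, Hr'; auto; intros H; apply Hy, in_or_app; auto.
Qed.

(** * Simulation of LJB by LJ+ *)

Definition negative (L : list formula) : Prop := forall C, In C L -> neg C = true.

Definition simulated (G : ctx) (A : formula) : Prop :=
  forall L r, negative L -> Forall (realized L r) G ->
  forall A0, alpha_renamed r A A0 -> LJp L A0.

Lemma simulated_L nf G path Gi As p ts :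
  clean_strategy nf ->
  ctx_equiv G (plug path (Gi ++ [IFm (imps As (Atom p ts))])) ->
  (forall x, In x (flat_map fvt ts) -> ~ In x (flat_map snd path)) ->
  (forall A, In A As ->
     simulated (nf (unwind [] path ++ Gi ++ [IFm (imps As (Atom p ts))])) A) ->
  simulated G (Atom p ts).
Proof.
  intros Hnf HG Hts IH L r HL HGr A0 HA0.
  apply (realized_ctx_equiv _ _ _ _ HG) in HGr.
  destruct (realized_plug_unwind L path _ r [] (Forall_nil _) HGr)
    as [ri [Hinner [Hunwind Hri]]].
  pose proof Hinner as HP; apply Forall_app in HP as [_ HP].
  apply Forall_inv in HP as [C [HC HAC]].
  destruct (alpha_renamed_imps_inv _ _ _ _ _ HAC) as [Cs [ts' [-> [Hts' HCs]]]].
  apply LJp_alpha_r with (Atom p ts').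
  { apply (alpha_renamed_alpha r (Atom p ts)); auto.
    apply (alpha_renamed_ext_in ri); auto; intros y Hy; apply Hri, Hts, Hy. }
  apply LJp_L with Cs; [split; auto|exact HC|].
  intros c Hc; destruct (HCs c Hc) as [a [Ha Hac]].
  apply (IH a Ha L ri HL); auto.
  apply realized_nf; auto; apply Forall_app; auto.
Qed.

Lemma simulated_Rall nf G x A :
  clean_strategy nf -> pos A = true ->
  simulated (nf [IB (bv (All x A)) G]) A -> simulated G (All x A).
Proof.
  intros Hnf HposA IH L r HL HGr A0 HA0.
  destruct (exists_fresh (flat_map fvf L ++ map r (dfv_form (dbf [] A)))) as [z Hz].
  destruct (alpha_renamed_All_fresh r x z A) as [B [HAB HxAzB]].
  { intros H; apply Hz, in_or_app; auto. }
  apply LJp_alpha_r with (All z B); [eapply alpha_renamed_alpha; eauto|].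
  apply LJp_Rall.
  - split; auto; simpl; rewrite (proj1 (alpha_renamed_pos_neg _ _ _ HAB)); exact HposA.
  - intros C HC HzC; apply Hz, in_or_app; left; apply in_flat_map; eauto.
  - apply (IH L (update r x z)); auto.
    apply realized_nf; auto; constructor; auto; apply realized_IB.
    exists r; split; auto; intros y Hy; unfold update.
    destruct (Nat.eqb y x) eqn:E; auto.
    apply Nat.eqb_eq in E; subst; exfalso; apply Hy; left; reflexivity.
Qed.

Lemma simulated_Rimp nf G A B :
  clean_strategy nf -> neg A = true -> pos B = true ->
  simulated (nf (G ++ [IFm A])) B -> simulated G (Imp A B).
Proof.
  intros Hnf HnegA HposB IH L r HL HGr A0 HA0.
  apply alpha_renamed_Imp_inv in HA0 as [A' [B' [-> [HA HB]]]].
  destruct (alpha_renamed_pos_neg _ _ _ HA) as [_ HnegA'].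
  destruct (alpha_renamed_pos_neg _ _ _ HB) as [HposB' _].
  apply LJp_Rimp; [split; [exact HL|simpl; rewrite HnegA', HposB', HnegA, HposB; reflexivity]|].
  apply (IH (A' :: L) r); auto.
  - intros C [<-|HC]; auto; rewrite HnegA'; exact HnegA.
  - apply realized_nf; auto; apply Forall_app; split.
    + eapply Forall_impl; [|exact HGr]; intros J; apply realized_incl.
      intros C HC; right; exact HC.
    + constructor; auto; exists A'; simpl; auto.
Qed.

Lemma LJB_simulated nf G A : clean_strategy nf -> LJB nf G A -> simulated G A.
Proof.
  intros Hnf; induction 1 as [G path Gi As p ts _ HG Hts _ IH
                             |G x A [_ [_ [_ HposA]]] _ IH
                             |G A B [_ [_ [_ HposAB]]] _ IH].
  - exact (simulated_L nf G path Gi As p ts Hnf HG Hts IH).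
  - exact (simulated_Rall nf G x A Hnf HposA IH).
  - simpl in HposAB; apply andb_prop in HposAB as [HnegA HposB].
    exact (simulated_Rimp nf G A B Hnf HnegA HposB IH).
Qed.

Theorem proposition7 (nf : ctx -> ctx) (Hnf : clean_strategy nf) (A : formula) :
  LJB nf [] A -> LJp [] A.
Proof.
  intros HA.
  apply (LJB_simulated nf [] A Hnf HA [] (fun y => y)).
  - intros C [].
  - constructor.
  - apply alpha_renamed_id.
Qed.
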